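(* Suppose the family of update functions $\mathrm{Upd}$ satisfies P1 and P2. Let $\mathcal{M}=(W,\mathcal{F})$ be a measure space, $\Pr\in\Delta_{\mathcal{M}}$, $A,B\in\mathcal{F}$, and suppose that for some $\Pr'\in\mathrm{Upd}^{\mathcal{M}}(\Pr,B)$ we have $0<\Pr(A|B)<1$ and $\Pr'(A)<\Pr(A|B)$. Then there exists $\Pr''\in\mathrm{Upd}^{\mathcal{M}}(\Pr,B)$ with $\Pr''(A)>\Pr(A|B)$.
   Context: A measure space is a pair $\mathcal{M}=(W,\mathcal{F})$ with $\mathcal{F}$ an algebra of subsets of $W$; $\Delta_{\mathcal{M}}$ is the set of all probability measures on $\mathcal{M}$. An update function on $\mathcal{M}$ is a map $\mathrm{Upd}^{\mathcal{M}}:2^{\Delta_{\mathcal{M}}}\times\mathcal{F}\to 2^{\Delta_{\mathcal{M}}}$ such that $\mathrm{Upd}^{\mathcal{M}}(X,B)=\emptyset$ whenever $\Pr(B)=0$ for all $\Pr\in X$; $\mathrm{Upd}^{\mathcal{M}}(\Pr,B)$ means $\mathrm{Upd}^{\mathcal{M}}(\{\Pr\},B)$. A family $\mathrm{Upd}=\{\mathrm{Upd}^{\mathcal{M}}\}$ has one update function for each measure space. $\Pr(A|B)=\Pr(A\cap B)/\Pr(B)$. A representation shift from $\mathcal{M}=(W,\mathcal{F})$ to $\mathcal{M}'=(W',\mathcal{F}')$ is a surjection $f:W\to W'$ with $f^{-1}(B)\in\mathcal{F}$ for all $B\in\mathcal{F}'$; $(f^*(\Pr))(A)=\Pr(f^{-1}(A))$,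 $f^*(X)=\{f^*(\Pr):\Pr\in X\}$. P1: for all $\mathcal{M}$, $X\subseteq\Delta_{\mathcal{M}}$, $B\in\mathcal{F}$: $\mathrm{Upd}^{\mathcal{M}}(X,B)\subseteq\{\Pr\in\Delta_{\mathcal{M}}:\Pr(B)=1\}$. P2: for every representation shift $f$ from $\mathcal{M}$ to $\mathcal{M}'$, every $X\subseteq\Delta_{\mathcal{M}}$ and $B\in\mathcal{F}'$: $\mathrm{Upd}^{\mathcal{M}'}(f^*(X),B)=f^*(\mathrm{Upd}^{\mathcal{M}}(X,f^{-1}(B)))$. *)

From Stdlib Require Import Reals Classical FunctionalExtensionality PropExtensionality.
Open Scope R_scope.

Definition set (W : Type) := W -> Prop.
Definition setT {W : Type} : set W := fun _ => True.
Definition setC {W : Type} (A : set W) : set W := fun w => ~ A w.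
Definition setU {W : Type} (A B : set W) : set W := fun w => A w \/ B w.
Definition setI {W : Type} (A B : set W) : set W := fun w => A w /\ B w.
Definition preimage {W W' : Type} (f : W -> W') (B : set W') : set W :=
  fun w => B (f w).

Record is_algebra {W : Type} (F : set (set W)) : Prop := {
  alg_T : F setT;
  alg_C : forall A, F A -> F (setC A);
  alg_U : forall A B, F A -> F B -> F (setU A B) }.

Record mspace := MSpace {
  carrier : Type;
  events : set (set carrier);
  events_algebra : is_algebra events }.

Lemma alg_I (M : mspace) (A B : set (carrier M)) :
  events M A -> events M B -> events M (setI A B).
Proof.
  intros hA hB.
  assert (E : setI A B = setC (setU (setC A) (setC B))).
  { apply functional_extensionality; intro w; apply propositional_extensionality;
    unfold setI, setC, setU; tauto. }
  rewrite E. destruct (events_algebra M) as [hT hC hU].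
  apply hC, hU; apply hC; assumption.
Qed.

Record prob (M : mspace) := Prob {
  pr : forall A : set (carrier M), events M A -> R;
  pr_ge0 : forall A (hA : events M A), 0 <= pr A hA;
  pr_T : forall hT : events M setT, pr setT hT = 1;
  pr_add : forall A B (hA : events M A) (hB : events M B)
             (hAB : events M (setU A B)),
      (forall w, A w -> B w -> False) ->
      pr (setU A B) hAB = pr A hA + pr B hB }.
Arguments pr {M} _ _ _.

Definition cond_pr {M : mspace} (P : prob M) (A B : set (carrier M))
  (hA : events M A) (hB : events M B) : R :=
  pr P (setI A B) (alg_I M A B hA hB) / pr P B hB.

Definition single {M : mspace} (P : prob M) : set (prob M) := fun Q => Q = P.

(* A family of (candidate) update functions: one map 2^Delta_M x F -> 2^Delta_M
   for every measure space M (we let it take any subset B, but all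
   conditions only concern B in F). *)
Definition UpdFamily := forall M : mspace, set (prob M) -> set (carrier M) -> set (prob M).

Definition is_update_family (Upd : UpdFamily) : Prop :=
  forall (M : mspace) (X : set (prob M)) (B : set (carrier M)) (hB : events M B),
    (forall P, X P -> pr P B hB = 0) -> forall Q, ~ Upd M X B Q.

Record rep_shift (M M' : mspace) := RepShift {
  rs_fun : carrier M -> carrier M';
  rs_surj : forall w', exists w, rs_fun w = w';
  rs_meas : forall B, events M' B -> events M (preimage rs_fun B) }.
Arguments rs_fun {M M'} _ _.
Arguments rs_meas {M M'} _ _ _.

Definition is_pushforward {M M' : mspace} (f : rep_shift M M') (P : prob M) (Q : prob M') : Prop :=
  forall A (hA : events M' A), pr Q A hA = pr P (preimage (rs_fun f) A) (rs_meas f A hA).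

Definition push_set {M M' : mspace} (f : rep_shift M M') (X : set (prob M)) : set (prob M') :=
  fun Q => exists P, X P /\ is_pushforward f P Q.

Definition P1 (Upd : UpdFamily) : Prop :=
  forall (M : mspace) (X : set (prob M)) (B : set (carrier M)) (hB : events M B) (Q : prob M),
    Upd M X B Q -> pr Q B hB = 1.

Definition P2 (Upd : UpdFamily) : Prop :=
  forall (M M' : mspace) (f : rep_shift M M') (X : set (prob M)) (B : set (carrier M')),
    events M' B ->
    forall Q : prob M',
      Upd M' (push_set f X) B Q <-> push_set f (Upd M X (preimage (rs_fun f) B)) Q.

(* Coarsening M to the algebra generated by A and B (a representation shift), a probability
   is determined by the pair (Pr(A ∩ B), Pr(B)).  Approximate p = Pr(A | B) from below,
   L <= n p < L + (p - Pr'(A)).  On a fine space whose part inside B consists of n cells, each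
   split into two parts of relative weights n p - L and 1 - (n p - L), a suitable prior is
   mapped onto Pr by each of n rotated "window" maps, window k sending L whole cells and one
   part of the next cell onto A ∩ B.  By P2, one update rho of the prior yields updates of Pr
   under every window map, window 0 reproducing Pr'.  Each cell lies in L windows, so the n
   resulting values of Pr''(A) sum to at least L; if none exceeded p, the sum would be at most
   Pr'(A) + (n - 1) p < L. *)

From Stdlib Require Import Reals Lra Lia Classical ClassicalEpsilon
  FunctionalExtensionality PropExtensionality ProofIrrelevance ZArith.
Open Scope R_scope.

Fixpoint sumR (n : nat) (f : nat -> R) : R :=
  match n with O => 0 | S n => sumR n f + f n end.

Lemma sumR_ext n f g : (forall j, (j < n)%nat -> f j = g j) -> sumR n f = sumR n g.
Proof.
  induction n as [|n IH]; intros hfg; simpl; [reflexivity|].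
  rewrite IH by (intros; apply hfg; lia). rewrite hfg by lia. reflexivity.
Qed.

Lemma sumR_plus n f g : sumR n (fun j => f j + g j) = sumR n f + sumR n g.
Proof. induction n as [|n IH]; simpl; [lra | rewrite IH; lra]. Qed.

Lemma sumR_scal n c f : sumR n (fun j => c * f j) = c * sumR n f.
Proof. induction n as [|n IH]; simpl; [lra | rewrite IH; lra]. Qed.

Lemma sumR_const n c : sumR n (fun _ => c) = INR n * c.
Proof. induction n as [|n IH]; simpl sumR; [simpl; lra | rewrite IH, S_INR; lra]. Qed.

Lemma sumR_le n f g : (forall j, (j < n)%nat -> f j <= g j) -> sumR n f <= sumR n g.
Proof.
  induction n as [|n IH]; intros hfg; simpl; [lra|].
  pose proof (hfg n ltac:(lia)). pose proof (IH ltac:(intros; apply hfg; lia)). lra.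
Qed.

Lemma sumR_succ_l n f : sumR (S n) f = f O + sumR n (fun j => f (S j)).
Proof. induction n as [|n IH]; simpl in *; [lra | rewrite IH; lra]. Qed.

Lemma sumR_swap n m F :
  sumR n (fun k => sumR m (fun i => F k i)) = sumR m (fun i => sumR n (fun k => F k i)).
Proof.
  induction n as [|n IH]; simpl.
  - induction m as [|m IHm]; simpl; [lra | rewrite <- IHm; lra].
  - rewrite IH, <- sumR_plus. reflexivity.
Qed.

Lemma sumR_rot1 n f : sumR n (fun j => f ((j + 1) mod n)%nat) = sumR n f.
Proof.
  destruct n as [|n]; [reflexivity|].
  rewrite (sumR_succ_l n f). cbn [sumR].
  replace ((n + 1) mod S n)%nat with O.
  2:{ replace (n + 1)%nat with (0 + 1 * S n)%nat by lia.
      rewrite Nat.Div0.mod_add. symmetry. apply Nat.mod_small. lia. }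
  rewrite (sumR_ext n _ (fun j => f (S j))); [lra|].
  intros j hj. f_equal. rewrite Nat.mod_small; lia.
Qed.

Lemma sumR_rot n s f : (0 < n)%nat -> sumR n (fun j => f ((j + s) mod n)%nat) = sumR n f.
Proof.
  intros hn. induction s as [|s IH].
  - apply sumR_ext. intros j hj. f_equal. rewrite Nat.add_0_r. apply Nat.mod_small; lia.
  - rewrite <- IH, <- (sumR_rot1 n (fun c => f ((c + s) mod n)%nat)).
    apply sumR_ext. intros j hj. f_equal.
    rewrite Nat.Div0.add_mod_idemp_l. f_equal. lia.
Qed.

Definition ind (P : Prop) : R := if excluded_middle_informative P then 1 else 0.

Lemma ind_true (P : Prop) : P -> ind P = 1.
Proof. intros h. unfold ind. destruct (excluded_middle_informative P); tauto. Qed.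

Lemma ind_false (P : Prop) : ~ P -> ind P = 0.
Proof. intros h. unfold ind. destruct (excluded_middle_informative P); tauto. Qed.

Lemma ind_iff (P Q : Prop) : (P <-> Q) -> ind P = ind Q.
Proof. intros h. f_equal. apply propositional_extensionality. exact h. Qed.

Lemma ind_ge0 P : 0 <= ind P.
Proof. unfold ind. destruct (excluded_middle_informative P); lra. Qed.

Lemma ind_or (P Q : Prop) : (P -> Q -> False) -> ind (P \/ Q) = ind P + ind Q.
Proof.
  intros h. unfold ind.
  destruct (excluded_middle_informative (P \/ Q)), (excluded_middle_informative P),
    (excluded_middle_informative Q); tauto || lra.
Qed.

Lemma sumR_ind_lt n m : sumR n (fun c => ind (c < m)%nat) = INR (Nat.min n m).
Proof.
  induction n as [|n IH]; simpl sumR; [reflexivity|]. rewrite IH.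
  destruct (Nat.lt_ge_cases n m) as [h|h].
  - rewrite ind_true by exact h. replace (Nat.min (S n) m) with (S (Nat.min n m)) by lia.
    rewrite S_INR. reflexivity.
  - rewrite ind_false by lia. replace (Nat.min (S n) m) with (Nat.min n m) by lia. lra.
Qed.

Lemma sumR_ind_rot_lt n m k : (0 < n)%nat -> (m <= n)%nat ->
  sumR n (fun j => ind ((j + k) mod n < m)%nat) = INR m.
Proof.
  intros hn hm. rewrite (sumR_rot n k (fun c => ind (c < m)%nat) hn), sumR_ind_lt.
  f_equal. lia.
Qed.

Lemma pigeonhole m (f : nat -> nat) : (forall k, (k <= m)%nat -> (f k < m)%nat) ->
  exists i j, (i < j <= m)%nat /\ f i = f j.
Proof.
  revert f. induction m as [|m IH]; intros f hf.
  - specialize (hf O (le_n _)). lia.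
  - destruct (classic (exists i, (i <= m)%nat /\ f i = f (S m))) as [[i [hi he]]|hno].
    { exists i, (S m). split; [lia | exact he]. }
    (* Merge the value m into f (S m), which no k <= m takes. *)
    set (g := fun k => if Nat.eq_dec (f k) m then f (S m) else f k).
    assert (hgm : forall k, (k <= m)%nat -> f k <> f (S m)).
    { intros k hk he. apply hno. exists k. split; assumption. }
    destruct (IH g) as [i [j [hij he]]].
    { intros k hk. unfold g. pose proof (hf k ltac:(lia)). pose proof (hf (S m) (le_n _)).
      pose proof (hgm k hk).
      destruct (Nat.eq_dec (f k) m); [|lia].
      destruct (Nat.eq_dec (f (S m)) m); [congruence | lia]. }
    exists i, j. split; [lia|]. unfold g in he.
    pose proof (hgm i ltac:(lia)). pose proof (hgm j ltac:(lia)).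
    destruct (Nat.eq_dec (f i) m), (Nat.eq_dec (f j) m); congruence.
Qed.

Definition nfloor (x : R) : nat := Z.to_nat (up x - 1).

Lemma nfloor_spec x : 0 <= x -> INR (nfloor x) <= x < INR (nfloor x) + 1.
Proof.
  intros hx. destruct (archimed x) as [h1 h2].
  assert (hz : (0 <= up x - 1)%Z).
  { assert (h : 0 < IZR (up x)) by lra. apply lt_0_IZR in h. lia. }
  unfold nfloor. rewrite INR_IZR_INZ, Z2Nat.id by exact hz.
  rewrite minus_IZR. simpl. lra.
Qed.

Lemma multiple_near_integer p delta : 0 <= p -> 0 < delta ->
  exists q K : nat, (1 <= q)%nat /\ Rabs (INR q * p - INR K) < delta.
Proof.
  intros hp hdelta.
  destruct (archimed_cor1 delta hdelta) as [m [hm hm0]].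
  assert (hmR : 0 < INR m) by (apply lt_0_INR; exact hm0).
  set (fl := fun k : nat => nfloor (INR k * p)).
  set (fr := fun k : nat => INR k * p - INR (fl k)).
  assert (hfl : forall k, INR (fl k) <= INR k * p < INR (fl k) + 1).
  { intros k. apply nfloor_spec. apply Rmult_le_pos; [apply pos_INR | exact hp]. }
  assert (hfr : forall k, 0 <= fr k < 1) by (intros k; unfold fr; pose proof (hfl k); lra).
  set (bin := fun k => nfloor (INR m * fr k)).
  assert (hbin : forall k, INR (bin k) <= INR m * fr k < INR (bin k) + 1).
  { intros k. apply nfloor_spec. pose proof (hfr k). apply Rmult_le_pos; lra. }
  destruct (pigeonhole m bin) as [i [j [hij hbij]]].
  { intros k _. apply INR_lt. pose proof (hbin k). pose proof (hfr k). nra. }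
  assert (hclose : Rabs (fr j - fr i) < delta).
  { apply Rle_lt_trans with (/ INR m); [|exact hm].
    apply (Rmult_le_reg_r (INR m)); [exact hmR|]. rewrite Rinv_l by lra.
    pose proof (hbin i). pose proof (hbin j). rewrite hbij in *.
    unfold Rabs; destruct (Rcase_abs (fr j - fr i)); nra. }
  assert (hflij : (fl i <= fl j)%nat).
  { assert (INR i * p <= INR j * p) by (apply Rmult_le_compat_r; [lra | apply le_INR; lia]).
    pose proof (hfl i). pose proof (hfl j).
    assert (h : INR (fl i) < INR (S (fl j))) by (rewrite S_INR; lra).
    apply INR_lt in h. lia. }
  exists (j - i)%nat, (fl j - fl i)%nat. split; [lia|].
  rewrite !minus_INR by lia.
  replace ((INR j - INR i) * p - (INR (fl j) - INR (fl i))) with (fr j - fr i)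
    by (unfold fr; ring).
  exact hclose.
Qed.

Lemma multiple_near_integer_below p delta : 0 < p -> 0 < delta ->
  exists n L : nat, (1 <= n)%nat /\ INR L <= INR n * p < INR L + delta.
Proof.
  intros hp hdelta.
  destruct (multiple_near_integer p (Rmin delta 1)) as [q [K [hq hqK]]];
    [lra | apply Rmin_glb_lt; lra |].
  pose proof (Rmin_l delta 1). pose proof (Rmin_r delta 1).
  destruct (Rle_or_lt (INR K) (INR q * p)) as [hle | hgt].
  { exists q, K. rewrite Rabs_right in hqK by lra. split; [exact hq | lra]. }
  (* qp = K - d falls just short of an integer; its t-th multiple, t = floor (1/d),
     falls just above the integer tK - 1. *)
  set (d := INR K - INR q * p).
  rewrite Rabs_left in hqK by lra.
  assert (hqp : 0 < INR q * p) by (apply Rmult_lt_0_compat; [apply lt_0_INR; lia | exact hp]).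
  assert (hK : (1 <= K)%nat) by (apply INR_lt; simpl; lra).
  set (t := nfloor (1 / d)).
  assert (ht : INR t <= 1 / d < INR t + 1)
    by (apply nfloor_spec; unfold d; apply Rlt_le, Rdiv_lt_0_compat; lra).
  assert (htd : INR t * d <= 1 < (INR t + 1) * d).
  { destruct ht as [ht1 ht2]. unfold Rdiv in *. rewrite Rmult_1_l in *.
    split; [apply (Rmult_le_reg_r (/ d)) | apply (Rmult_lt_reg_r (/ d))];
      try (apply Rinv_0_lt_compat; unfold d; lra);
      rewrite Rmult_assoc, Rinv_r by (unfold d; lra); lra. }
  assert (ht1 : (0 < t)%nat) by (apply INR_lt; simpl; unfold d in *; nra).
  exists (t * q)%nat, (t * K - 1)%nat. split; [nia|].
  rewrite minus_INR by nia. rewrite !mult_INR. simpl INR.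
  replace (INR t * INR q * p) with (INR t * INR K - INR t * d) by (unfold d; ring).
  unfold d in *. nra.
Qed.

Lemma set_ext {W : Type} (S T : set W) : (forall w, S w <-> T w) -> S = T.
Proof.
  intros h. apply functional_extensionality. intros w.
  apply propositional_extensionality. apply h.
Qed.

Lemma pr_ext {M : mspace} (Q : prob M) (S S' : set (carrier M)) hS hS' :
  S = S' -> pr Q S hS = pr Q S' hS'.
Proof. intros <-. f_equal. apply proof_irrelevance. Qed.

Lemma events_setT (M : mspace) : events M setT.
Proof. exact (alg_T _ (events_algebra M)). Qed.

Lemma events_setC (M : mspace) S : events M S -> events M (setC S).
Proof. exact (alg_C _ (events_algebra M) S). Qed.

Lemma events_setU (M : mspace) S T : events M S -> events M T -> events M (setU S T).
Proof. exact (alg_U _ (events_algebra M) S T). Qed.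

Lemma events_const (M : mspace) (c : Prop) : events M (fun _ => c).
Proof.
  destruct (classic c) as [hc | hc].
  - replace (fun _ : carrier M => c) with (@setT (carrier M)); [apply events_setT|].
    apply set_ext. unfold setT. tauto.
  - replace (fun _ : carrier M => c) with (setC (@setT (carrier M)));
      [apply events_setC, events_setT|].
    apply set_ext. unfold setC, setT. tauto.
Qed.

Section ProbabilityFacts.
Variables (M : mspace) (Q : prob M).

Lemma pr_union_disjoint S T U hS hT hU :
  (forall w, U w <-> S w \/ T w) -> (forall w, S w -> T w -> False) ->
  pr Q U hU = pr Q S hS + pr Q T hT.
Proof.
  intros hST hdisj. assert (E : U = setU S T) by (apply set_ext; exact hST).
  subst U. apply pr_add. exact hdisj.
Qed.

Lemma pr_empty S hS : (forall w, ~ S w) -> pr Q S hS = 0.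
Proof.
  intros hS0.
  assert (h : pr Q S hS = pr Q S hS + pr Q S hS)
    by (apply pr_union_disjoint; [tauto | intros w hw; contradiction (hS0 w)]).
  lra.
Qed.

Lemma pr_pos_inhabited S hS : 0 < pr Q S hS -> exists w, S w.
Proof.
  intros hpos. apply NNPP. intros hno.
  rewrite pr_empty in hpos; [lra|]. intros w hw. apply hno. exists w. exact hw.
Qed.

Lemma pr_setC S hS hSc : pr Q (setC S) hSc = 1 - pr Q S hS.
Proof.
  pose proof (pr_T _ Q (events_setT M)) as hT.
  rewrite (pr_union_disjoint S (setC S) setT hS hSc) in hT; [lra| |].
  - intros w. unfold setT, setC. split; [intros _; apply classic | tauto].
  - unfold setC. tauto.
Qed.

Lemma pr_le S T hS hT : (forall w, S w -> T w) -> pr Q S hS <= pr Q T hT.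
Proof.
  intros hST.
  assert (hD : events M (setI T (setC S))) by (apply alg_I; [exact hT | apply events_setC, hS]).
  rewrite (pr_union_disjoint S (setI T (setC S)) T hS hD hT).
  - pose proof (pr_ge0 _ Q _ hD). lra.
  - intros w. unfold setI, setC.
    split; [destruct (classic (S w)); tauto | intros [h | [h _]]; auto].
  - unfold setI, setC. tauto.
Qed.

Lemma pr_le1 S hS : pr Q S hS <= 1.
Proof. rewrite <- (pr_T _ Q (events_setT M)). apply pr_le. unfold setT. auto. Qed.

Lemma pr_setI_full S B hS hB hSB : pr Q B hB = 1 -> pr Q S hS = pr Q (setI S B) hSB.
Proof.
  intros hB1.
  assert (hc : events M (setI S (setC B))) by (apply alg_I; [exact hS | apply events_setC, hB]).
  rewrite (pr_union_disjoint (setI S B) (setI S (setC B)) S hSB hc hS).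
  - pose proof (pr_le (setI S (setC B)) (setC B) hc (events_setC M B hB)
                  ltac:(unfold setI; tauto)) as hle.
    rewrite (pr_setC B hB) in hle.
    pose proof (pr_ge0 _ Q _ hc). lra.
  - intros w. unfold setI, setC. split; [destruct (classic (B w)); tauto | tauto].
  - unfold setI, setC. tauto.
Qed.

End ProbabilityFacts.

Definition push {M M' : mspace} (f : rep_shift M M') (Q : prob M) : prob M' :=
  Prob M' (fun E hE => pr Q (preimage (rs_fun f) E) (rs_meas f E hE))
    (fun E hE => pr_ge0 _ Q _ _)
    (fun hT => pr_T _ Q _)
    (fun E F hE hF hEF hdisj => pr_add _ Q _ _ _ _ _ (fun w => hdisj (rs_fun f w))).

(* The coarsest algebra on [W] containing [A] and [B]: its atoms are A ∩ B, A^c ∩ B and B^c. *)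
Definition same_label {W : Type} (A B : set W) (x y : W) : Prop :=
  (B x <-> B y) /\ (B x -> (A x <-> A y)).

Definition label_events {W : Type} (A B : set W) (E : set W) : Prop :=
  forall x y, same_label A B x y -> (E x <-> E y).

Lemma label_events_algebra {W : Type} (A B : set W) : is_algebra (label_events A B).
Proof.
  split.
  - intros x y _. unfold setT. tauto.
  - intros E hE x y h. unfold setC. specialize (hE x y h). tauto.
  - intros E F hE hF x y h. unfold setU. specialize (hE x y h). specialize (hF x y h). tauto.
Qed.

Definition label_space (M : mspace) (A B : set (carrier M)) : mspace :=
  MSpace (carrier M) (label_events A B) (label_events_algebra A B).

Ltac label_event := intros ?x ?y ?h; unfold same_label, setI, setC in *; tauto.

Section LabelSpace.
Variables (M : mspace) (A B : set (carrier M)).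

Lemma label_events_AB : label_events A B (setI A B).
Proof. label_event. Qed.
Lemma label_events_AcB : label_events A B (setI (setC A) B).
Proof. label_event. Qed.
Lemma label_events_Bc : label_events A B (setC B).
Proof. label_event. Qed.
Lemma label_events_B : label_events A B B.
Proof. label_event. Qed.

Lemma label_event_is_event (hA : events M A) (hB : events M B) E :
  label_events A B E -> events M E.
Proof.
  intros hE.
  set (meets := fun S : set (carrier M) => exists x, E x /\ S x).
  replace E with (setU (setU (setI (setI A B) (fun _ => meets (setI A B)))
                               (setI (setI (setC A) B) (fun _ => meets (setI (setC A) B))))
                        (setI (setC B) (fun _ => meets (setC B)))).
  - repeat apply events_setU || apply alg_I || apply events_setC || apply events_const
      || assumption.
  - apply set_ext. intros w. unfold meets, setU, setI, setC. split.
    + intros [[[hw [x [hx hxS]]] | [hw [x [hx hxS]]]] | [hw [x [hx hxS]]]];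
        (apply (hE x w); [unfold same_label, setC in *; tauto | exact hx]).
    + intros hw. destruct (classic (B w)); [destruct (classic (A w)) |]; eauto 10.
Qed.

Definition label_shift (hA : events M A) (hB : events M B) : rep_shift M (label_space M A B) :=
  RepShift M (label_space M A B) (fun w => w) (fun w' => ex_intro _ w' eq_refl)
    (label_event_is_event hA hB).

Lemma label_pr_atom (Q : prob (label_space M A B)) E S hES hS :
  label_events A B E -> (forall x y, S x -> S y -> same_label A B x y) ->
  pr Q (setI E S) hES = ind (exists x, E x /\ S x) * pr Q S hS.
Proof.
  intros hE hSlab. destruct (classic (exists x, E x /\ S x)) as [[x [hx hxS]] | hno].
  - rewrite ind_true by eauto. rewrite Rmult_1_l. apply pr_ext, set_ext. intros w.
    unfold setI. split; [tauto|]. intros hw. split; [|exact hw]. apply (hE x w); auto.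
  - rewrite ind_false by exact hno. rewrite Rmult_0_l. apply pr_empty.
    intros w [hw hwS]. apply hno. eauto.
Qed.

Lemma label_pr_decomp (Q : prob (label_space M A B)) (E : set (carrier M)) hE :
  pr Q E hE =
    ind (exists x, E x /\ setI A B x) * pr Q (setI A B) label_events_AB
  + ind (exists x, E x /\ setI (setC A) B x)
      * (pr Q B label_events_B - pr Q (setI A B) label_events_AB)
  + ind (exists x, E x /\ setC B x) * (1 - pr Q B label_events_B).
Proof.
  assert (h1 : events (label_space M A B) (setI E (setI A B)))
    by (apply (alg_I (label_space M A B)); [exact hE | apply label_events_AB]).
  assert (h2 : events (label_space M A B) (setI E (setI (setC A) B)))
    by (apply (alg_I (label_space M A B)); [exact hE | apply label_events_AcB]).
  assert (h3 : events (label_space M A B) (setI E (setC B)))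
    by (apply (alg_I (label_space M A B)); [exact hE | apply label_events_Bc]).
  assert (hEB : events (label_space M A B) (setI E B))
    by (apply (alg_I (label_space M A B)); [exact hE | apply label_events_B]).
  rewrite (pr_union_disjoint _ Q (setI E B) (setI E (setC B)) E hEB h3 hE)
    by (intros w; unfold setI, setC; destruct (classic (B w)); tauto).
  rewrite (pr_union_disjoint _ Q (setI E (setI A B)) (setI E (setI (setC A) B)) (setI E B)
             h1 h2 hEB)
    by (intros w; unfold setI, setC; destruct (classic (A w)); tauto).
  rewrite (label_pr_atom Q E _ h1 label_events_AB),
    (label_pr_atom Q E _ h2 label_events_AcB),
    (label_pr_atom Q E _ h3 label_events_Bc) by (exact hE || label_event).
  rewrite (pr_setC (label_space M A B) Q B label_events_B).
  rewrite (pr_union_disjoint (label_space M A B) Q (setI A B) (setI (setC A) B) B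
             label_events_AB label_events_AcB label_events_B)
    by (intros w; unfold setI, setC; destruct (classic (A w)); tauto).
  ring.
Qed.

Lemma label_prob_ext (Q1 Q2 : prob (label_space M A B)) :
  pr Q1 (setI A B) label_events_AB = pr Q2 (setI A B) label_events_AB ->
  pr Q1 B label_events_B = pr Q2 B label_events_B ->
  forall E hE, pr Q1 E hE = pr Q2 E hE.
Proof.
  intros hAB hB E hE. rewrite (label_pr_decomp Q1), (label_pr_decomp Q2), hAB, hB. reflexivity.
Qed.

End LabelSpace.

(* Of the first coordinate, events only see whether it lies in [B]; the second coordinate
   indexes the cells. *)
Definition fine_events {W : Type} (B : set W) (E : set (W * (nat * bool))) : Prop :=
  forall w w' jb, (B w <-> B w') -> (E (w, jb) <-> E (w', jb)).

Lemma fine_events_algebra {W : Type} (B : set W) : is_algebra (fine_events B).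
Proof.
  split.
  - intros w w' jb _. unfold setT. tauto.
  - intros E hE w w' jb h. unfold setC. specialize (hE w w' jb h). tauto.
  - intros E F hE hF w w' jb h. unfold setU.
    specialize (hE w w' jb h). specialize (hF w w' jb h). tauto.
Qed.

Definition fine_space (M : mspace) (B : set (carrier M)) : mspace :=
  MSpace (carrier M * (nat * bool)) (fine_events B) (fine_events_algebra B).

Lemma fine_events_B {W : Type} (B : set W) (Phi : nat * bool -> Prop) :
  fine_events B (fun x => B (fst x) /\ Phi (snd x)).
Proof. intros w w' jb h. simpl. tauto. Qed.

(* Cell [j] consists of the parts [(j, true)] and [(j, false)]; the k-th window consists of
   the [L] whole cells starting at [n - k] and the [true] part of the next one. *)
Definition window (n L k : nat) (jb : nat * bool) : Prop :=
  ((fst jb + k) mod n < L)%nat \/ ((fst jb + k) mod n = L /\ snd jb = true).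

Lemma window_true n L k j : window n L k (j, true) <-> ((j + k) mod n < S L)%nat.
Proof. unfold window. simpl. lia. Qed.

Lemma window_false n L k j : window n L k (j, false) <-> ((j + k) mod n < L)%nat.
Proof. unfold window. simpl. split; [intros [h | [_ h]]; [exact h | discriminate] | now left]. Qed.

Section Coverage.
Variables (M : mspace) (B : set (carrier M)) (rho : prob (fine_space M B)) (n : nat).

Let residue (c : nat) : R := pr rho _ (fine_events_B B (fun jb => (fst jb mod n = c)%nat)).

Lemma pr_residue_sum (T : nat -> Prop) m :
  pr rho _ (fine_events_B B (fun jb => (fst jb mod n < m)%nat /\ T (fst jb mod n))) =
  sumR m (fun c => ind (T c) * residue c).
Proof.
  induction m as [|m IH]; simpl sumR.
  - apply pr_empty. intros x [_ [h _]]. lia.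
  - rewrite <- IH. unfold residue.
    rewrite (pr_union_disjoint _ rho _
               (fun x => B (fst x) /\ (fst (snd x) mod n = m)%nat /\ T m)
               _ (fine_events_B B (fun jb => (fst jb mod n < m)%nat /\ T (fst jb mod n)))
               (fine_events_B B (fun jb => (fst jb mod n = m)%nat /\ T m))).
    + f_equal. destruct (classic (T m)) as [hT | hT].
      * rewrite ind_true, Rmult_1_l by exact hT. apply pr_ext, set_ext. intros x. tauto.
      * rewrite ind_false, Rmult_0_l by exact hT. apply pr_empty. tauto.
    + intros x. simpl. split.
      * intros [hB [hlt hT]]. destruct (Nat.eq_dec (fst (snd x) mod n) m) as [e | ne].
        -- right. rewrite <- e. tauto.
        -- left. repeat split; [exact hB | lia | exact hT].
      * intros [[hB [hlt hT]] | [hB [e hT]]]; repeat split; try assumption; try lia.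
        rewrite e. exact hT.
    + intros x [_ [h1 _]] [_ [h2 _]]. lia.
Qed.

Hypothesis (hn : (0 < n)%nat).

Lemma sumR_residue : sumR n residue = pr rho _ (fine_events_B B (fun _ => True)).
Proof.
  rewrite (sumR_ext n residue (fun c => ind True * residue c))
    by (intros; rewrite ind_true by exact I; ring).
  rewrite <- (pr_residue_sum (fun _ => True)). apply pr_ext, set_ext. intros x. simpl.
  pose proof (Nat.mod_upper_bound (fst (snd x)) n ltac:(lia)). tauto.
Qed.

(* Every residue lies in exactly [L] of the [n] windows. *)
Lemma windows_cover L : (L <= n)%nat ->
  pr rho _ (fine_events_B B (fun _ => True)) = 1 ->
  INR L <= sumR n (fun k => pr rho _ (fine_events_B B (window n L k))).
Proof.
  intros hLn hB1.
  assert (hk : forall k, sumR n (fun c => ind ((c + k) mod n < L)%nat * residue c)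
                         <= pr rho _ (fine_events_B B (window n L k))).
  { intros k. rewrite <- pr_residue_sum. apply pr_le. intros [w [j b]] [hw [_ h]]. simpl in *.
    split; [exact hw|]. left. simpl. rewrite Nat.Div0.add_mod_idemp_l in h. exact h. }
  eapply Rle_trans; [| apply sumR_le; intros k _; apply hk].
  rewrite sumR_swap.
  rewrite (sumR_ext n _ (fun c => residue c * INR L)).
  - rewrite (sumR_ext n _ (fun c => INR L * residue c)) by (intros; ring).
    rewrite sumR_scal, sumR_residue, hB1. lra.
  - intros c hc. rewrite <- (sumR_ind_rot_lt n L c hn hLn), <- sumR_scal.
    apply sumR_ext. intros k _. rewrite Nat.add_comm. ring.
Qed.

End Coverage.

Section Windows.
Variables (M : mspace) (A B : set (carrier M)) (n L : nat) (wa wb : carrier M).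
Hypotheses (hwa : A wa /\ B wa) (hwb : ~ A wb /\ B wb) (hLn : (L < n)%nat).

(* Inside [B], the k-th window is sent into [A] and its complement into [B \ A],
   keeping [w] itself whenever it already has the right label (for surjectivity). *)
Definition window_map (k : nat) (x : carrier M * (nat * bool)) : carrier M :=
  let w := fst x in
  if excluded_middle_informative (B w) then
    if excluded_middle_informative (window n L k (snd x))
    then (if excluded_middle_informative (A w) then w else wa)
    else (if excluded_middle_informative (A w) then wb else w)
  else w.

Lemma window_map_spec k x :
  (B (window_map k x) <-> B (fst x)) /\
  (B (fst x) -> (A (window_map k x) <-> window n L k (snd x))) /\
  (~ B (fst x) -> window_map k x = fst x).
Proof.
  unfold window_map.
  destruct (excluded_middle_informative (B (fst x))) as [hB | hB]; [| tauto].
  destruct (excluded_middle_informative (window n L k (snd x)));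
    destruct (excluded_middle_informative (A (fst x))); tauto.
Qed.

Lemma window_map_surj k : (k < n)%nat -> forall w, exists x, window_map k x = w.
Proof.
  intros hk w.
  destruct (classic (B w)) as [hB | hB]; [destruct (classic (A w)) as [hA | hA] |].
  - exists (w, (n - k, true)%nat). unfold window_map. simpl.
    destruct (excluded_middle_informative (B w)); [| contradiction].
    destruct (excluded_middle_informative (window n L k (n - k, true)%nat)) as [_ | hno].
    + destruct (excluded_middle_informative (A w)); tauto.
    + exfalso. apply hno. unfold window. simpl.
      replace (n - k + k)%nat with n by lia. rewrite Nat.Div0.mod_same. lia.
  - exists (w, (L + n - k, false)%nat). unfold window_map. simpl.
    destruct (excluded_middle_informative (B w)); [| contradiction].
    destruct (excluded_middle_informative (window n L k (L + n - k, false)%nat)) as [hin | _].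
    + exfalso. unfold window in hin. simpl in hin.
      replace (L + n - k + k)%nat with (L + 1 * n)%nat in hin by lia.
      rewrite Nat.Div0.mod_add, Nat.mod_small in hin by lia.
      destruct hin as [h | [_ h]]; [lia | discriminate].
    + destruct (excluded_middle_informative (A w)); tauto.
  - exists (w, (O, false)). exact (proj2 (proj2 (window_map_spec k (w, (O, false)))) hB).
Qed.

Lemma window_map_meas k E : label_events A B E -> fine_events B (preimage (window_map k) E).
Proof.
  intros hE w w' jb hww'. unfold preimage. apply hE.
  destruct (window_map_spec k (w, jb)) as [hB [hA hnB]].
  destruct (window_map_spec k (w', jb)) as [hB' [hA' hnB']]. simpl in *.
  unfold same_label. destruct (classic (B w)) as [hw | hw].
  - specialize (hA hw). assert (hw' : B w') by tauto. specialize (hA' hw'). tauto.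
  - assert (hw' : ~ B w') by tauto. rewrite (hnB hw), (hnB' hw'). tauto.
Qed.

Definition window_shift k (hk : (k < n)%nat) : rep_shift (fine_space M B) (label_space M A B) :=
  RepShift (fine_space M B) (label_space M A B) (window_map k) (window_map_surj k hk)
    (window_map_meas k).

Lemma preimage_window_map_AB k :
  preimage (window_map k) (setI A B) = (fun x => B (fst x) /\ window n L k (snd x)).
Proof.
  apply set_ext. intros x. unfold preimage, setI.
  destruct (window_map_spec k x) as [hB [hA _]]. destruct (classic (B (fst x))); tauto.
Qed.

Lemma preimage_window_map_B k : preimage (window_map k) B = (fun x => B (fst x) /\ True).
Proof.
  apply set_ext. intros x. unfold preimage. destruct (window_map_spec k x). tauto.
Qed.

End Windows.

(* Weight [wT] on each [true] part and [wF] on each [false] part (inside [B], at [wa]),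
   and the remaining mass [gam] outside [B], at [wc]. *)
Section Prior.
Variables (M : mspace) (B : set (carrier M)) (n : nat) (wa wc : carrier M) (wT wF gam : R).

Definition prior_pr (E : set (carrier M * (nat * bool))) : R :=
  sumR n (fun j => wT * ind (E (wa, (j, true))) + wF * ind (E (wa, (j, false))))
  + gam * ind (E (wc, (O, false))).

Lemma prior_pr_ge0 (hwT : 0 <= wT) (hwF : 0 <= wF) (hgam : 0 <= gam) E : 0 <= prior_pr E.
Proof.
  unfold prior_pr.
  assert (0 <= sumR n (fun j => wT * ind (E (wa, (j, true))) + wF * ind (E (wa, (j, false))))).
  { rewrite <- (Rmult_0_r (INR n)), <- sumR_const. apply sumR_le. intros j _.
    pose proof (ind_ge0 (E (wa, (j, true)))). pose proof (ind_ge0 (E (wa, (j, false)))). nra. }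
  pose proof (ind_ge0 (E (wc, (O, false)))). nra.
Qed.

Lemma prior_pr_setT (htot : INR n * (wT + wF) + gam = 1) : prior_pr setT = 1.
Proof. unfold prior_pr, setT. rewrite !ind_true by exact I. rewrite sumR_const. lra. Qed.

Lemma prior_pr_add E F : (forall x, E x -> F x -> False) ->
  prior_pr (setU E F) = prior_pr E + prior_pr F.
Proof.
  intros hdisj. unfold prior_pr, setU. rewrite ind_or by apply hdisj.
  rewrite (sumR_ext n _ (fun j => (wT * ind (E (wa, (j, true))) + wF * ind (E (wa, (j, false))))
                                + (wT * ind (F (wa, (j, true))) + wF * ind (F (wa, (j, false))))))
    by (intros; rewrite !ind_or by apply hdisj; ring).
  rewrite sumR_plus. ring.
Qed.

Definition prior (hwT : 0 <= wT) (hwF : 0 <= wF) (hgam : 0 <= gam)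
  (htot : INR n * (wT + wF) + gam = 1) : prob (fine_space M B) :=
  Prob (fine_space M B) (fun E _ => prior_pr E) (fun E _ => prior_pr_ge0 hwT hwF hgam E)
    (fun _ => prior_pr_setT htot) (fun E F _ _ _ hdisj => prior_pr_add E F hdisj).

Hypotheses (hwa : B wa) (hwc : ~ B wc \/ gam = 0).

Lemma prior_outside_B (Phi : nat * bool -> Prop) : gam * ind (B wc /\ Phi (O, false)) = 0.
Proof. destruct hwc as [h | ->]; [rewrite ind_false by tauto |]; ring. Qed.

Lemma prior_window L k : (L < n)%nat ->
  prior_pr (fun x => B (fst x) /\ window n L k (snd x)) = INR (S L) * wT + INR L * wF.
Proof.
  intros hLn. unfold prior_pr. cbn [fst snd]. rewrite prior_outside_B, Rplus_0_r.
  rewrite (sumR_ext n _ (fun j => wT * ind ((j + k) mod n < S L)%nat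
                                + wF * ind ((j + k) mod n < L)%nat)).
  - rewrite sumR_plus, !sumR_scal, !sumR_ind_rot_lt by lia. ring.
  - intros j _. pose proof (window_true n L k j). pose proof (window_false n L k j).
    f_equal; f_equal; apply ind_iff; tauto.
Qed.

Lemma prior_B : prior_pr (fun x => B (fst x) /\ True) = INR n * (wT + wF).
Proof.
  unfold prior_pr. cbn [fst snd]. rewrite (prior_outside_B (fun _ => True)), Rplus_0_r.
  rewrite (sumR_ext n _ (fun _ => wT + wF)), sumR_const; [reflexivity|].
  intros j _. rewrite !ind_true by tauto. ring.
Qed.

End Prior.

Lemma upd_transfer (Upd : UpdFamily) (hP2 : P2 Upd) (M1 M2 N : mspace)
  (f : rep_shift M1 N) (g : rep_shift M2 N) (X1 : set (prob M1)) (X2 : set (prob M2))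
  (B : set (carrier N)) (hB : events N B) (R1 : prob M1) :
  push_set f X1 = push_set g X2 -> Upd M1 X1 (preimage (rs_fun f) B) R1 ->
  exists R2, Upd M2 X2 (preimage (rs_fun g) B) R2 /\ is_pushforward g R2 (push f R1).
Proof.
  intros hX hR1. apply (proj1 (hP2 M2 N g X2 B hB (push f R1))). rewrite <- hX.
  apply (proj2 (hP2 M1 N f X1 B hB (push f R1))).
  exists R1. split; [exact hR1 | intros E hE; reflexivity].
Qed.

Lemma push_set_single_eq (M1 M2 N : mspace) (f : rep_shift M1 N) (g : rep_shift M2 N)
  (Q1 : prob M1) (Q2 : prob M2) :
  (forall E hE, pr (push f Q1) E hE = pr (push g Q2) E hE) ->
  push_set f (single Q1) = push_set g (single Q2).
Proof.
  intros hQ. apply set_ext. intros Q. unfold push_set, single, is_pushforward. split.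
  - intros [Q1' [-> hQ1]]. exists Q2. split; [reflexivity|]. intros E hE.
    rewrite hQ1. apply hQ.
  - intros [Q2' [-> hQ2]]. exists Q1. split; [reflexivity|]. intros E hE.
    rewrite hQ2. symmetry. apply hQ.
Qed.

Section ConditionalProbability.
Variables (M : mspace) (P : prob M) (A B : set (carrier M)) (hA : events M A) (hB : events M B).

Lemma cond_pr_pos_denominator : 0 < cond_pr P A B hA hB -> 0 < pr P B hB.
Proof.
  unfold cond_pr. intros hpos.
  pose proof (pr_ge0 _ P _ (alg_I M A B hA hB)).
  pose proof (pr_le M P (setI A B) B (alg_I M A B hA hB) hB ltac:(unfold setI; tauto)).
  destruct (Rle_lt_dec (pr P B hB) 0) as [h | h]; [| exact h].
  replace (pr P (setI A B) (alg_I M A B hA hB)) with 0 in hpos by lra.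
  unfold Rdiv in hpos. lra.
Qed.

Lemma cond_pr_mul : 0 < pr P B hB ->
  pr P (setI A B) (alg_I M A B hA hB) = cond_pr P A B hA hB * pr P B hB.
Proof. intros hpos. unfold cond_pr. field. lra. Qed.

Lemma cond_pr_witnesses : 0 < cond_pr P A B hA hB < 1 ->
  (exists wa, A wa /\ B wa) /\ (exists wb, ~ A wb /\ B wb).
Proof.
  intros [hpos hlt1]. pose proof (cond_pr_pos_denominator hpos) as hBpos.
  pose proof (cond_pr_mul hBpos) as hmul.
  split; [apply (pr_pos_inhabited M P _ (alg_I M A B hA hB)); nra|].
  assert (hAcB : events M (setI (setC A) B)) by (apply alg_I; [apply events_setC|]; assumption).
  destruct (pr_pos_inhabited M P _ hAcB) as [wb hwb]; [| exists wb; exact hwb].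
  rewrite (pr_union_disjoint M P (setI A B) (setI (setC A) B) B (alg_I M A B hA hB) hAcB hB)
    in hmul, hBpos
    by (intros w; unfold setI, setC; destruct (classic (A w)); tauto).
  pose proof (pr_ge0 _ P _ hAcB). pose proof (pr_ge0 _ P _ (alg_I M A B hA hB)). nra.
Qed.

End ConditionalProbability.

Section UpdateArgument.
Variables (Upd : UpdFamily) (hP1 : P1 Upd) (hP2 : P2 Upd).
Variables (M : mspace) (P : prob M) (A B : set (carrier M)) (hA : events M A) (hB : events M B).
Variables (n L : nat) (wa wb : carrier M).
Hypotheses (hwa : A wa /\ B wa) (hwb : ~ A wb /\ B wb) (hLn : (L < n)%nat).

Let shift k (hk : (k < n)%nat) := window_shift M A B n L wa wb hwa hwb hLn k hk.
Let id_shift := label_shift M A B hA hB.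

Lemma window_prior_exists :
  0 < cond_pr P A B hA hB -> INR L <= INR n * cond_pr P A B hA hB <= INR L + 1 ->
  exists mu : prob (fine_space M B),
    forall k hk, push_set (shift k hk) (single mu) = push_set id_shift (single P).
Proof.
  intros hpos hL.
  pose proof (cond_pr_pos_denominator M P A B hA hB hpos) as hbe.
  pose proof (pr_le1 M P B hB) as hbe1.
  pose proof (cond_pr_mul M P A B hA hB hbe) as hmul.
  set (p := cond_pr P A B hA hB) in *. set (be := pr P B hB) in *.
  assert (hnR : 0 < INR n) by (apply lt_0_INR; lia).
  assert (hwc : exists wc, ~ B wc \/ 1 - be = 0).
  { destruct (classic (exists w, ~ B w)) as [[wc hwc] | hall]; [now exists wc; left|].
    exists wa. right. unfold be. rewrite (pr_ext P B setT hB (events_setT M)), pr_T; [ring|].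
    apply set_ext. intros w. unfold setT. split; [tauto |].
    intros _. apply NNPP. intros hw. apply hall. now exists w. }
  destruct hwc as [wc hwc].
  set (theta := INR n * p - INR L).
  assert (hwT : 0 <= be * theta / INR n)
    by (apply Rmult_le_pos;
        [apply Rmult_le_pos; unfold theta; lra | apply Rlt_le, Rinv_0_lt_compat, hnR]).
  assert (hwF : 0 <= be * (1 - theta) / INR n)
    by (apply Rmult_le_pos;
        [apply Rmult_le_pos; unfold theta; lra | apply Rlt_le, Rinv_0_lt_compat, hnR]).
  assert (hgam : 0 <= 1 - be) by lra.
  assert (htot : INR n * (be * theta / INR n + be * (1 - theta) / INR n) + (1 - be) = 1)
    by (field; lra).
  exists (prior M B n wa wc _ _ _ hwT hwF hgam htot).
  intros k hk. apply push_set_single_eq, label_prob_ext; simpl.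
  - rewrite preimage_window_map_AB, prior_window by first [assumption | exact (proj2 hwa)].
    transitivity (pr P (setI A B) (alg_I M A B hA hB)); [| apply pr_ext; reflexivity].
    rewrite hmul, S_INR.
    unfold theta. field. lra.
  - rewrite preimage_window_map_B, prior_B by first [assumption | exact (proj2 hwa)].
    transitivity be; [field; lra | apply pr_ext; reflexivity].
Qed.

Lemma upd_window_sums (mu : prob (fine_space M B)) :
  (forall k hk, push_set (shift k hk) (single mu) = push_set id_shift (single P)) ->
  forall P', Upd M (single P) B P' ->
  exists x : nat -> R,
    x O = pr P' A hA /\
    (forall k, (k < n)%nat -> exists Q, Upd M (single P) B Q /\ pr Q A hA = x k) /\
    INR L <= sumR n x.
Proof.
  intros hmu P' hP'.
  assert (hn : (0 < n)%nat) by lia.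
  destruct (upd_transfer Upd hP2 M (fine_space M B) (label_space M A B) id_shift (shift O hn)
              (single P) (single mu) B (label_events_B M A B) P' (eq_sym (hmu O hn)) hP')
    as [rho [hrho hrho_push]].
  assert (hpreB : forall k hk, preimage (rs_fun (shift k hk)) B = (fun x => B (fst x) /\ True))
    by (intros k hk;
        change (preimage (window_map M A B n L wa wb k) B = (fun x => B (fst x) /\ True));
        apply preimage_window_map_B; assumption).
  rewrite hpreB in hrho.
  set (x := fun k => pr rho _ (fine_events_B B (window n L k))).
  assert (hx : forall Q k hk, Upd M (single P) B Q ->
      pr Q (setI A B) (rs_meas id_shift _ (label_events_AB M A B))
      = pr rho (preimage (rs_fun (shift k hk)) (setI A B))
          (rs_meas (shift k hk) _ (label_events_AB M A B)) ->
      pr Q A hA = x k).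
  { intros Q k hk hQ hQrho.
    rewrite (pr_setI_full M Q A B hA hB (alg_I M A B hA hB) (hP1 _ _ _ hB _ hQ)).
    transitivity (pr Q (setI A B) (rs_meas id_shift _ (label_events_AB M A B)));
      [apply pr_ext; reflexivity |].
    rewrite hQrho. apply pr_ext.
    change (preimage (window_map M A B n L wa wb k) (setI A B)
            = (fun x => B (fst x) /\ window n L k (snd x))).
    apply preimage_window_map_AB; assumption. }
  exists x. split; [| split].
  - symmetry. apply (hx P' O hn hP'). exact (hrho_push _ (label_events_AB M A B)).
  - intros k hk. rewrite <- (hpreB k hk) in hrho.
    destruct (upd_transfer Upd hP2 (fine_space M B) M (label_space M A B) (shift k hk) id_shift
                (single mu) (single P) B (label_events_B M A B) rho (hmu k hk) hrho)
      as [Q [hQ hQ_push]].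
    exists Q. split; [exact hQ|]. apply (hx Q k hk hQ).
    symmetry. exact (hQ_push _ (label_events_AB M A B)).
  - apply windows_cover; [lia | lia |]. exact (hP1 _ _ _ _ _ hrho).
Qed.

End UpdateArgument.

Theorem proposition4p3 (Upd : UpdFamily) (hUpd : is_update_family Upd)
  (hP1 : P1 Upd) (hP2 : P2 Upd)
  (M : mspace) (P : prob M) (A B : set (carrier M))
  (hA : events M A) (hB : events M B)
  (P' : prob M) (hP' : Upd M (single P) B P')
  (hpos : 0 < cond_pr P A B hA hB) (hlt1 : cond_pr P A B hA hB < 1)
  (hless : pr P' A hA < cond_pr P A B hA hB) :
  exists P'' : prob M, Upd M (single P) B P'' /\ pr P'' A hA > cond_pr P A B hA hB.
Proof.
  destruct (classic (exists P'', Upd M (single P) B P'' /\ pr P'' A hA > cond_pr P A B hA hB))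
    as [h | hno]; [exact h | exfalso].
  destruct (cond_pr_witnesses M P A B hA hB (conj hpos hlt1)) as [[wa hwa] [wb hwb]].
  set (p := cond_pr P A B hA hB) in *.
  destruct (multiple_near_integer_below p (p - pr P' A hA) hpos ltac:(lra))
    as (n & L & hn & hL).
  pose proof (pr_ge0 _ P' A hA).
  assert (hnR : 0 < INR n) by (apply lt_0_INR; lia).
  assert (hLn : (L < n)%nat) by (apply INR_lt; nra).
  assert (hLp : INR L <= INR n * p <= INR L + 1) by lra.
  destruct (window_prior_exists M P A B hA hB n L wa wb hwa hwb hLn hpos hLp) as [mu hmu].
  destruct (upd_window_sums Upd hP1 hP2 M P A B hA hB n L wa wb hwa hwb hLn mu hmu P' hP')
    as (x & hx0 & hxQ & hsum).
  assert (hxp : forall k, (k < n)%nat -> x k <= p).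
  { intros k hk. destruct (hxQ k hk) as [Q [hQ <-]].
    apply Rnot_gt_le. intros hgt. apply hno. exists Q. split; assumption. }
  destruct n as [|n]; [lia|].
  rewrite sumR_succ_l, hx0 in hsum.
  pose proof (sumR_le n (fun j => x (S j)) (fun _ => p) ltac:(intros; apply hxp; lia)).
  rewrite sumR_const, S_INR in *. lra.
Qed.
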